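(* Let $D$ be a pipe dream and $i\ge1$ a row index with $\mathcal J_i(D)\neq\emptyset$, and let $j_{\min}=\min\mathcal J_i(D)$. Then $\delta(D)=\delta\big(D\setminus\{(i,j_{\min})\}\big)\star s_i$.
   Context: Permutations: $S_\infty=\bigcup_n S_n$ is generated by the simple transpositions $s_a=(a\ a{+}1)$, $a\ge 1$; $l(w)$ is the Coxeter length of $w$. A pipe dream is a finite subset $D\subset\mathbb{Z}_{>0}\times\mathbb{Z}_{>0}$; its elements $(r,c)$ are called crosses (in row $r$, column $c$). The reading word of $D$ is obtained by listing the crosses row by row from top to bottom, within each row from right to left (decreasing $c$), and recording for each cross $(r,c)$ its antidiagonal index $r+c-1$; this gives a word $(a_1,\dots,a_k)$. For $u\in S_\infty$ put $u\star s_a=us_a$ if $l(us_a)=l(u)+1$ and $u\star s_a=u$ otherwise. The Demazure product of $D$ is $\delta(D)=(\cdots((e\star s_{a_1})\star s_{a_2})\cdots)\star s_{a_k}$. For a pipe dream $D$ and row index $i$: $\mathrm{start}_i(D)=\min\{c\ge1:(i,c)\notin D\}$ and $\mathcal J_i(D)=\{c<\mathrm{start}_i(D):(i+1,c)\notin D\}$. *)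

From mathcomp Require Import all_boot.
Set Implicit Arguments. Unset Strict Implicit. Unset Printing Implicit Defensive.

(* ---------- Permutations of S_infty ----------
   An element of S_infty is represented by its one-line notation on an
   initial segment {1,...,n}: a list [w(1); ...; w(n)] which is a permutation
   of 1..n; w fixes every x > n.  Two lists represent the same permutation
   iff [papp] agrees on them (trailing fixed points may differ). *)
Definition perm_inf := seq nat.

Definition papp (w : perm_inf) (x : nat) : nat :=
  if (0 < x) && (x <= size w) then nth 0 w x.-1 else x.

Definition peq (u v : perm_inf) : Prop := forall x, 0 < x -> papp u x = papp v x.

Definition sfun (a x : nat) : nat :=
  if x == a then a.+1 else if x == a.+1 then a else x.

Definition pad (n : nat) (w : perm_inf) : perm_inf :=
  w ++ iota (size w).+1 (n - size w).

Definition rmul_s (u : perm_inf) (a : nat) : perm_inf :=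
  let u' := pad a.+1 u in [seq papp u' (sfun a x) | x <- iota 1 (size u')].

Definition plength (w : perm_inf) : nat :=
  size [seq pq <- allpairs pair (iota 0 (size w)) (iota 0 (size w))
         | (pq.1 < pq.2) && (nth 0 w pq.2 < nth 0 w pq.1)].

Definition dstar (u : perm_inf) (a : nat) : perm_inf :=
  if plength (rmul_s u a) == (plength u).+1 then rmul_s u a else u.

(* ---------- Pipe dreams ----------
   A pipe dream is a finite set of crosses (r,c), r,c >= 1, given as a list
   (duplicates are irrelevant). *)
Definition pipe_dream := seq (nat * nat).

Definition is_pipe_dream (D : pipe_dream) : bool :=
  all (fun p => (0 < p.1) && (0 < p.2)) D.

Definition read_le (p q : nat * nat) : bool :=
  (p.1 < q.1) || ((p.1 == q.1) && (q.2 <= p.2)).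

Definition reading_word (D : pipe_dream) : seq nat :=
  [seq (p.1 + p.2).-1 | p <- sort read_le (undup D)].

Definition demazure (D : pipe_dream) : perm_inf :=
  foldl dstar [::] (reading_word D).

(* start_i(D) = min { c >= 1 : (i,c) \notin D } ; the minimum is attained
   among 1..size D + 1 *)
Definition start (i : nat) (D : pipe_dream) : nat :=
  (find (fun c => (i, c) \notin D) (iota 1 (size D).+1)).+1.

Definition Jset (i : nat) (D : pipe_dream) : seq nat :=
  [seq c <- iota 1 (start i D).-1 | (i.+1, c) \notin D].

Definition remove_cross (D : pipe_dream) (p : nat * nat) : pipe_dream :=
  [seq q <- D | q != p].

(* Reading one-line notations as functions, the Demazure step [dstar u a] becomes
   the 0-Hecke operator f |-> (if f a < f (a+1) then f \o s_a else f), and these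
   operators satisfy the braid and far-commutation relations.  Write jmin = m+1.
   Row i contains (i,1), ..., (i,m+1), row i+1 contains (i+1,1), ..., (i+1,m) but
   not (i+1,m+1), so after the letter i+m of the cross (i,jmin) the reading word
   continues with (i+m-1 ... i) Q (i+m ... i+1) B, where the letters of Q (row i+1,
   right of jmin) are at least i+m+2 and those of B (lower rows) at least i+2.  In
   the 0-Hecke monoid
     s_{i+m} (s_{i+m-1}...s_i) Q (s_{i+m}...s_{i+1}) B
       = (s_{i+m-1}...s_i) Q (s_{i+m}...s_{i+1}) B s_i:
   commute Q out of the way, push s_{i+m} through the staircase by induction on m
   (one braid relation per step, leaving s_i at its end), and commute s_i past B. *)

From mathcomp Require Import all_boot zify.
Set Implicit Arguments. Unset Strict Implicit. Unset Printing Implicit Defensive.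

(** * The 0-Hecke action on functions *)

Lemma sfun_cases a x :
  (x = a /\ sfun a x = a.+1) \/ (x = a.+1 /\ sfun a x = a) \/
  (x <> a /\ x <> a.+1 /\ sfun a x = x).
Proof.
by rewrite /sfun; case: eqP => ?; [left | case: eqP => ?; [right; left | right; right]].
Qed.

Lemma sfunK a : involutive (sfun a).
Proof. by move=> x; have := sfun_cases a x; have := sfun_cases a (sfun a x); lia. Qed.

Definition hecke (f : nat -> nat) (a : nat) : nat -> nat :=
  if f a < f a.+1 then f \o sfun a else f.

Lemma heckeE f a x : hecke f a x =
  if x == a then maxn (f a) (f a.+1) else if x == a.+1 then minn (f a) (f a.+1) else f x.
Proof.
rewrite /hecke; case: ltnP => /= lt; have := sfun_cases a x;
  case=> [[-> sx] | [[-> sx] | [/eqP/negPf xa [/eqP/negPf xa1 sx]]]];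
  rewrite ?sx ?xa ?xa1 ?eqxx ?gtn_eqF //; lia.
Qed.

Lemma eq_hecke f g a : f =1 g -> hecke f a =1 hecke g a.
Proof. by move=> fg x; rewrite !heckeE !fg. Qed.

Definition far (a b : nat) : bool := (a.+1 < b) || (b.+1 < a).

Lemma hecke_far_comm f a b : far a b -> hecke (hecke f a) b =1 hecke (hecke f b) a.
Proof. move=> /orP ab x; rewrite !heckeE; repeat (case: eqP => /= ?); lia. Qed.

Definition hecke_eq (w1 w2 : seq nat) : Prop :=
  forall f, foldl hecke f w1 =1 foldl hecke f w2.

Lemma eq_foldl_hecke f g w : f =1 g -> foldl hecke f w =1 foldl hecke g w.
Proof. by elim: w f g => //= a w IHw f g fg; apply/IHw/eq_hecke. Qed.

Lemma hecke_eq_sym w1 w2 : hecke_eq w1 w2 -> hecke_eq w2 w1.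
Proof. by move=> e12 f x; rewrite e12. Qed.

Lemma hecke_eq_trans w2 w1 w3 : hecke_eq w1 w2 -> hecke_eq w2 w3 -> hecke_eq w1 w3.
Proof. by move=> e12 e23 f x; rewrite e12 e23. Qed.

Lemma hecke_eq_cat u1 u2 v1 v2 :
  hecke_eq u1 u2 -> hecke_eq v1 v2 -> hecke_eq (u1 ++ v1) (u2 ++ v2).
Proof. by move=> eu ev f x; rewrite !foldl_cat ev; apply: eq_foldl_hecke. Qed.

Lemma hecke_eq_catl u v1 v2 : hecke_eq v1 v2 -> hecke_eq (u ++ v1) (u ++ v2).
Proof. exact: hecke_eq_cat. Qed.

Lemma hecke_eq_catr u1 u2 v : hecke_eq u1 u2 -> hecke_eq (u1 ++ v) (u2 ++ v).
Proof. by move/hecke_eq_cat; apply. Qed.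

Lemma foldl_hecke_far_comm f a w :
  all (far a) w -> foldl hecke (hecke f a) w =1 hecke (foldl hecke f w) a.
Proof.
elim: w f => //= b w IHw f /andP[ab aw] x.
by rewrite (eq_foldl_hecke w (hecke_far_comm f ab)) IHw.
Qed.

Lemma hecke_eq_far_comm w1 w2 : allrel far w1 w2 -> hecke_eq (w1 ++ w2) (w2 ++ w1).
Proof.
elim: w1 => [|a w1 IHw1] /=; first by move=> _ f x; rewrite cats0.
case/andP=> aw2 w12 f x /=; rewrite IHw1 // !foldl_cat /=.
by apply: eq_foldl_hecke => y; rewrite foldl_hecke_far_comm.
Qed.

Lemma hecke_eq_braid a : hecke_eq [:: a; a.+1; a] [:: a.+1; a; a.+1].
Proof. move=> f x /=; rewrite !heckeE; repeat (case: eqP => /= ?); lia. Qed.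

Lemma hecke_eq_swap_blocks u w1 w2 v :
  allrel far w1 w2 -> hecke_eq (u ++ w1 ++ w2 ++ v) (u ++ w2 ++ w1 ++ v).
Proof.
by move=> far12; apply/hecke_eq_catl; rewrite !catA; apply/hecke_eq_catr/hecke_eq_far_comm.
Qed.

Lemma mem_rev_iota x i m : (x \in rev (iota i m)) = (i <= x < i + m).
Proof. by rewrite mem_rev mem_iota. Qed.

Lemma hecke_eq_staircase i m v :
  hecke_eq ((i + m) :: rev (iota i m) ++ rev (iota i.+1 m) ++ v)
           (rev (iota i m) ++ rev (iota i.+1 m) ++ i :: v).
Proof.
elim: m v => [|m IHm] v; first by rewrite addn0.
rewrite -addn1 !iotaD !rev_cat /= addn1 addnS addSn.
set n := i + m; set c := rev (iota i m); set d := rev (iota i.+1 m).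
have far_c : allrel far c [:: n.+1].
  by rewrite allrel1r; apply/allP => x; rewrite mem_rev_iota /far; lia.
apply: (@hecke_eq_trans ([:: n.+1; n] ++ [:: n.+1] ++ c ++ d ++ v)).
  exact: (hecke_eq_swap_blocks [:: n.+1; n] (d ++ v) far_c).
apply: (@hecke_eq_trans ([:: n; n.+1] ++ n :: c ++ d ++ v)).
  exact (hecke_eq_catr (c ++ d ++ v) (hecke_eq_sym (hecke_eq_braid n))).
apply: (@hecke_eq_trans ([:: n] ++ [:: n.+1] ++ c ++ d ++ i :: v)).
  exact: (hecke_eq_catl [:: n; n.+1] (IHm v)).
exact/hecke_eq_sym/(hecke_eq_swap_blocks [:: n] (d ++ i :: v) far_c).
Qed.

Lemma hecke_eq_move i m Q B :
  all (leq (i + m).+2) Q -> all (leq i.+2) B ->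
  hecke_eq ((i + m) :: rev (iota i m) ++ Q ++ rev (iota i.+1 m) ++ B)
           (rev (iota i m) ++ Q ++ rev (iota i.+1 m) ++ B ++ [:: i]).
Proof.
move=> /allP geQ /allP geB; set c := rev (iota i m); set d := rev (iota i.+1 m).
have far_Q : allrel far ((i + m) :: c) Q.
  apply/allrelP => x q; rewrite inE mem_rev_iota => hx /geQ; rewrite /far; lia.
apply: (@hecke_eq_trans (Q ++ (i + m) :: c ++ d ++ B)).
  exact: (hecke_eq_swap_blocks [::] (d ++ B) far_Q).
apply: (@hecke_eq_trans (Q ++ c ++ d ++ i :: B)).
  exact/hecke_eq_catl/hecke_eq_staircase.
apply: (@hecke_eq_trans (Q ++ c ++ d ++ B ++ [:: i])).
  do 3 apply: hecke_eq_catl; apply: (@hecke_eq_far_comm [:: i]).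
  by rewrite allrel1l; apply/allP => b /geB; rewrite /far; lia.
apply: (hecke_eq_swap_blocks [::] (d ++ B ++ [:: i])).
rewrite allrelC; move: far_Q; rewrite allrel_consl => /andP[_].
by apply: sub_allrel => x y; rewrite /far orbC.
Qed.

(** * The Demazure product in one-line notation *)

Definition inversion (w : seq nat) (x y : nat) : bool := (x < y) && (nth 0 w y < nth 0 w x).

Lemma plengthE w :
  plength w = \sum_(x <- iota 0 (size w)) \sum_(y <- iota 0 (size w)) inversion w x y.
Proof.
rewrite /plength size_filter -sum1_count big_mkcond big_allpairs.
by apply: eq_bigr => x _; apply: eq_bigr => y _; rewrite /inversion; case: ifP.
Qed.

Lemma big_iota_sfun n p (F : nat -> nat) : p.+1 < n ->
  \sum_(x <- iota 0 n) F x = \sum_(x <- iota 0 n) F (sfun p x).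
Proof.
move=> pn; rewrite -(big_map (sfun p) predT); apply/perm_big/uniq_perm.
- exact: iota_uniq.
- by rewrite (map_inj_uniq (can_inj (sfunK p))) iota_uniq.
move=> x; rewrite mem_iota; apply/idP/mapP => [xn | [y + ->]].
  by exists (sfun p x); rewrite ?sfunK // mem_iota; have := sfun_cases p x; lia.
by rewrite mem_iota; have := sfun_cases p y; lia.
Qed.

Lemma big_iota_pair_delta n a b (F : nat -> nat -> nat) : a < n -> b < n ->
  \sum_(x <- iota 0 n) \sum_(y <- iota 0 n) ((x == a) && (y == b)) * F x y = F a b.
Proof.
move=> an bn; have inn k : k < n -> k \in iota 0 n by rewrite mem_iota.
rewrite (bigD1_seq a) ?inn ?iota_uniq //= [X in _ + X]big1 => [|x /negPf xa]; last first.
  by apply: big1 => y _; rewrite xa.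
rewrite addn0 (bigD1_seq b) ?inn ?iota_uniq //= [X in _ + X]big1 => [|y /negPf yb].
  by rewrite !eqxx mul1n !addn0.
by rewrite yb andbF.
Qed.

(* Exchanges the entries at the 0-based positions [p] and [p.+1], i.e. right
   multiplication by s_(p+1). *)
Definition swap_adj (w : seq nat) (p : nat) : seq nat :=
  [seq nth 0 w (sfun p k) | k <- iota 0 (size w)].

Lemma size_swap_adj w p : size (swap_adj w p) = size w.
Proof. by rewrite size_map size_iota. Qed.

Lemma nth_swap_adj w p k : k < size w -> nth 0 (swap_adj w p) k = nth 0 w (sfun p k).
Proof. by move=> kw; rewrite (nth_map 0) ?size_iota // nth_iota. Qed.

Lemma plength_swap_adj w p : p.+1 < size w ->
  plength (swap_adj w p) + (nth 0 w p.+1 < nth 0 w p) =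
  plength w + (nth 0 w p < nth 0 w p.+1).
Proof.
move=> pw; rewrite !plengthE size_swap_adj.
set I := iota 0 (size w); pose b x y : nat := nth 0 w y < nth 0 w x.
have sfun_lt k : k < size w -> sfun p k < size w by have := sfun_cases p k; lia.
have -> : \sum_(x <- I) \sum_(y <- I) inversion (swap_adj w p) x y =
          \sum_(x <- I) \sum_(y <- I) (sfun p x < sfun p y) * b x y.
  rewrite (big_iota_sfun _ pw); apply: eq_big_seq => x; rewrite mem_iota => xw.
  rewrite (big_iota_sfun _ pw); apply: eq_big_seq => y; rewrite mem_iota => yw.
  by rewrite /inversion !nth_swap_adj ?sfunK ?sfun_lt // /b; case: (_ < _); case: (_ < _).
rewrite -[X in _ + X](big_iota_pair_delta b (ltnW pw) pw).
rewrite -[X in _ = _ + X](big_iota_pair_delta b pw (ltnW pw)) -!big_split /=.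
apply: eq_bigr => x _; rewrite -!big_split; apply: eq_bigr => y _ /=.
rewrite /inversion /b; case: (_ < nth 0 w x); rewrite ?andbF ?andbT ?muln0 ?muln1 //.
by have := sfun_cases p x; have := sfun_cases p y; lia.
Qed.

(* Satisfied by one-line notations of permutations; it makes padding with fixed
   points inversion-free. *)
Definition bounded (w : perm_inf) : bool := all (fun v => v <= size w) w.

Lemma size_pad n u : size (pad n u) = size u + (n - size u).
Proof. by rewrite size_cat size_iota. Qed.

Lemma nth_pad n u k : nth 0 (pad n u) k =
  if k < size u then nth 0 u k else if k < size u + (n - size u) then k.+1 else 0.
Proof.
rewrite nth_cat; case: ltnP => // uk.
by case: ltnP => kn; [rewrite nth_iota; lia | rewrite nth_default // size_iota; lia].
Qed.

Lemma bounded_pad n u : bounded u -> bounded (pad n u).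
Proof.
move=> /allP bu; apply/allP => v; rewrite size_pad mem_cat mem_iota.
by case/orP => [/bu | ]; lia.
Qed.

Lemma plength_pad n u : bounded u -> plength (pad n u) = plength u.
Proof.
move=> /allP bu; have bnd x : x < size u -> nth 0 u x <= size u by move=> /(mem_nth 0)/bu.
rewrite !plengthE size_pad iotaD add0n big_cat /= [X in _ + X]big1_seq ?addn0 => [|x]; last first.
  rewrite mem_iota => /andP[_ /andP[ux xn]]; apply: big1_seq => y /andP[_].
  rewrite mem_cat !mem_iota add0n => yr; rewrite /inversion !nth_pad [x < size u]ltnNge ux xn /=.
  by case: ltnP => xy; rewrite ?andbF //= ifN; [rewrite ifT; lia | lia].
apply: eq_big_seq => x; rewrite mem_iota add0n => /andP[_ xu].
rewrite big_cat /= [X in _ + X]big1_seq ?addn0 => [|y]; last first.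
  rewrite mem_iota => /andP[_ /andP[uy yn]].
  rewrite /inversion !nth_pad xu [y < size u]ltnNge uy yn /=; have := bnd x xu; lia.
apply: eq_big_seq => y; rewrite mem_iota add0n => /andP[_ yu].
by rewrite /inversion !nth_pad xu yu.
Qed.

Lemma papp_pad n u : papp (pad n u) =1 papp u.
Proof.
move=> [|x] //; rewrite /papp /= size_pad nth_pad.
by case: (ltnP x (size u)) => xu; case: (ltnP x (size u + (n - size u))) => xn //; lia.
Qed.

Lemma papp_nth w x : 0 < x <= size w -> papp w x = nth 0 w x.-1.
Proof. by rewrite /papp => ->. Qed.

Lemma size_rmul_s u a : size (rmul_s u a) = size (pad a.+1 u).
Proof. by rewrite size_map size_iota. Qed.

Lemma rmul_s_swap_adj u a : 0 < a -> rmul_s u a = swap_adj (pad a.+1 u) a.-1.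
Proof.
move=> a0; rewrite /rmul_s /swap_adj (iotaDl 1 0) -map_comp.
apply/eq_in_map => k; rewrite mem_iota size_pad /= => kn.
have -> : sfun a (1 + k) = (sfun a.-1 k).+1.
  by have := sfun_cases a (1 + k); have := sfun_cases a.-1 k; lia.
by rewrite papp_nth // size_pad; have := sfun_cases a.-1 k; lia.
Qed.

Lemma papp_rmul_s u a : 0 < a -> papp (rmul_s u a) =1 papp u \o sfun a.
Proof.
move=> a0 [|x] /=; first by rewrite /sfun !ifN //; lia.
rewrite -(papp_pad a.+1 u); case: (leqP x.+1 (size (pad a.+1 u))) => xn.
  by rewrite papp_nth ?size_rmul_s // (nth_map 0) ?size_iota // nth_iota.
have -> : sfun a x.+1 = x.+1 by rewrite /sfun !ifN //; move: xn; rewrite size_pad; lia.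
by rewrite /papp size_rmul_s [x.+1 <= _]leqNgt xn andbF.
Qed.

Lemma dstarE u a : 0 < a -> bounded u ->
  dstar u a = if papp u a < papp u a.+1 then rmul_s u a else u.
Proof.
move=> a0 bu; set u' := pad a.+1 u.
have au' : a.-1.+1 < size u' by rewrite size_pad; lia.
have := plength_swap_adj au'; rewrite -rmul_s_swap_adj // prednK //.
have nth_u' y : 0 < y <= a.+1 -> nth 0 u' y.-1 = papp u y.
  by move=> ya; rewrite -(papp_pad a.+1) papp_nth // size_pad; lia.
have e0 : nth 0 u' a.-1 = papp u a by apply: nth_u'; lia.
have e1 : nth 0 u' a = papp u a.+1 by apply: (nth_u' a.+1); lia.
rewrite e0 e1 plength_pad // /dstar.
by case: ltngtP; case: eqP => //; lia.
Qed.

Lemma papp_dstar u a : 0 < a -> bounded u -> papp (dstar u a) =1 hecke (papp u) a.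
Proof.
by move=> a0 bu x; rewrite dstarE // /hecke; case: ifP => // _; rewrite papp_rmul_s.
Qed.

Lemma bounded_dstar u a : 0 < a -> bounded u -> bounded (dstar u a).
Proof.
move=> a0 bu; rewrite dstarE //; case: ifP => // _.
have /allP bu' := bounded_pad a.+1 bu.
apply/allP => v /mapP[x]; rewrite size_rmul_s mem_iota => /andP[x0 xn] ->.
have sx : 0 < sfun a x <= size (pad a.+1 u).
  by move: xn; rewrite size_pad; have := sfun_cases a x; lia.
by case/andP: sx => s0 s1; rewrite papp_nth ?s0 // bu' // mem_nth // prednK.
Qed.

Lemma bounded_foldl_dstar u w : all (leq 1) w -> bounded u -> bounded (foldl dstar u w).
Proof. by elim: w u => //= a w IHw u /andP[a0 aw] bu; apply/IHw/bounded_dstar. Qed.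

Lemma papp_foldl_dstar u w : all (leq 1) w -> bounded u ->
  papp (foldl dstar u w) =1 foldl hecke (papp u) w.
Proof.
elim: w u => //= a w IHw u /andP[a0 aw] bu x.
by rewrite IHw ?bounded_dstar //; apply: eq_foldl_hecke (papp_dstar a0 bu) x.
Qed.

(** * The reading word of a pipe dream *)

Definition read_lt (p q : nat * nat) : bool := (p.1 < q.1) || ((p.1 == q.1) && (q.2 < p.2)).

Lemma read_le_total : total read_le.
Proof. by move=> [a b] [c d]; rewrite /read_le /=; do 2 case: eqP; lia. Qed.

Lemma read_le_trans : transitive read_le.
Proof. by move=> [a b] [c d] [e f]; rewrite /read_le /=; do 3 case: eqP; lia. Qed.

Lemma read_lt_trans : transitive read_lt.
Proof. by move=> [a b] [c d] [e f]; rewrite /read_lt /=; do 3 case: eqP; lia. Qed.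

Lemma read_lt_irr : irreflexive read_lt.
Proof. by move=> [a b]; rewrite /read_lt /= !ltnn andbF. Qed.

Lemma read_ltE p q : read_lt p q = (p != q) && read_le p q.
Proof.
by case: p q => [a b] [c d]; rewrite /read_lt /read_le xpair_eqE /=; do 2 case: eqP; lia.
Qed.

Lemma read_lt_total p q : p != q -> read_lt p q || read_lt q p.
Proof. by move=> pq; rewrite !read_ltE pq eq_sym pq read_le_total. Qed.

Definition reading_order (D : pipe_dream) : seq (nat * nat) := sort read_le (undup D).

Definition antidiag (p : nat * nat) : nat := (p.1 + p.2).-1.

Lemma reading_wordE D : reading_word D = map antidiag (reading_order D).
Proof. by []. Qed.

Lemma mem_reading_order D : reading_order D =i D.
Proof. by move=> q; rewrite mem_sort mem_undup. Qed.

Lemma sorted_reading_order D : sorted read_lt (reading_order D).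
Proof.
rewrite sorted_pairwise; last exact: read_lt_trans.
apply: (@sub_pairwise _ [rel p q | (p != q) && read_le p q]) => [p q|].
  by rewrite read_ltE.
rewrite pairwise_relI -uniq_pairwise -sorted_pairwise; last exact: read_le_trans.
by rewrite sort_uniq undup_uniq (sort_sorted read_le_total).
Qed.

Lemma reading_orderE D s : sorted read_lt s -> s =i D -> reading_order D = s.
Proof.
move=> ss sD; apply: (irr_sorted_eq read_lt_trans read_lt_irr) => //.
  exact: sorted_reading_order.
by move=> q; rewrite mem_reading_order sD.
Qed.

Lemma reading_order_remove_cross D p :
  reading_order (remove_cross D p) = filter (predC1 p) (reading_order D).
Proof. by rewrite /reading_order (filter_sort read_le_total read_le_trans) filter_undup. Qed.

Lemma mem_row_before_start D i c : 0 < c < start i D -> (i, c) \in D.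
Proof.
case/andP=> c0; rewrite /start ltnS => cs.
have cf : c.-1 < find (fun c => (i, c) \notin D) (iota 1 (size D).+1) by lia.
have := before_find 0 cf; rewrite nth_iota ?add1n ?prednK //; first by move/negbFE.
by have := find_size (fun c => (i, c) \notin D) (iota 1 (size D).+1); rewrite size_iota; lia.
Qed.

Lemma mem_Jset D i c :
  (c \in Jset i D) = [&& (i.+1, c) \notin D, 0 < c & c < start i D].
Proof. by rewrite mem_filter mem_iota add1n. Qed.

Lemma mem_map_pair (k r c : nat) (s : seq nat) :
  ((r, c) \in [seq (k, c') | c' <- s]) = (r == k) && (c \in s).
Proof.
apply/mapP/andP => [[c' c's [-> ->]] | [/eqP -> cs]]; first by rewrite eqxx.
by exists c.
Qed.

Lemma sorted_cat_allrel (T : Type) (r : rel T) s1 s2 : transitive r ->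
  sorted r s1 -> sorted r s2 -> allrel r s1 s2 -> sorted r (s1 ++ s2).
Proof. by move=> r_tr; rewrite !sorted_pairwise // pairwise_cat => -> -> ->. Qed.

Lemma sorted_row (k m : nat) : sorted read_lt [seq (k, c) | c <- rev (iota 1 m)].
Proof.
rewrite sorted_map rev_sorted; apply: sub_sorted (iota_ltn_sorted 1 m).
by move=> a b /= ab; rewrite /read_lt /= eqxx ltnn ab.
Qed.

Section ReadingWordSplit.

Variables (D : pipe_dream) (i m : nat).
Hypotheses (D_pos : is_pipe_dream D)
  (row_i : forall c, 0 < c <= m.+1 -> (i, c) \in D)
  (gap : (i.+1, m.+1) \notin D)
  (row_i1 : forall c, 0 < c <= m -> (i.+1, c) \in D).

Let p0 := (i, m.+1).
Let L := reading_order D.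
Let before := [seq q <- L | read_lt q p0].
Let left_i := [seq (i, c) | c <- rev (iota 1 m)].
Let right_i1 := [seq q <- L | (q.1 == i.+1) && (m.+1 < q.2)].
Let left_i1 := [seq (i.+1, c) | c <- rev (iota 1 m)].
Let below := [seq q <- L | i.+1 < q.1].
Let after := left_i ++ right_i1 ++ left_i1 ++ below.

Lemma mem_after q : (q \in after) = (q \in D) && read_lt p0 q.
Proof.
case: q => r c; rewrite !mem_cat !mem_map_pair !mem_filter !mem_reading_order !mem_rev_iota /=.
have [rcD | rcD] := boolP ((r, c) \in D); rewrite ?andbT ?andbF.
  have /andP[/= r0 c0] := allP D_pos _ rcD.
  have ne : ~~ ((r == i.+1) && (c == m.+1)) by apply: contraNN gap => /andP[/eqP<- /eqP<-].
  by move: r0 c0 ne; rewrite /read_lt /=; lia.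
have nl_i : ~~ ((r == i) && (1 <= c < 1 + m)).
  by apply: contraNN rcD => /andP[/eqP-> cm]; apply: row_i; lia.
have nl_i1 : ~~ ((r == i.+1) && (1 <= c < 1 + m)).
  by apply: contraNN rcD => /andP[/eqP-> cm]; apply: row_i1; lia.
by rewrite (negbTE nl_i) (negbTE nl_i1).
Qed.

Lemma sorted_after : sorted read_lt after.
Proof.
have s_filter P : sorted read_lt [seq q <- L | P q].
  exact (sorted_filter read_lt_trans P (sorted_reading_order D)).
apply: (sorted_cat_allrel read_lt_trans (sorted_row i m)).
  apply: (sorted_cat_allrel read_lt_trans (s_filter _)).
  apply: (sorted_cat_allrel read_lt_trans (sorted_row i.+1 m) (s_filter _)).
all: apply/allrelP => -[a b] [c d].
all: rewrite ?mem_cat !mem_map_pair !mem_filter !mem_rev_iota /read_lt /=; lia.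
Qed.

Lemma reading_order_split : reading_order D = before ++ p0 :: after.
Proof.
have p0D : p0 \in D by apply: row_i; rewrite ltn0Sn leqnn.
apply: reading_orderE => [|q].
  apply: sorted_cat_allrel; first exact: read_lt_trans.
  - by apply: sorted_filter (sorted_reading_order D); exact: read_lt_trans.
  - rewrite /= path_min_sorted ?sorted_after //.
    by apply/allP => q; rewrite mem_after => /andP[].
  apply/allrelP => q q'; rewrite mem_filter inE mem_after => /andP[qp0 _].
  by case/orP => [/eqP-> // | /andP[_]]; apply: read_lt_trans.
rewrite mem_cat inE mem_after mem_filter mem_reading_order.
have [-> | qp0] := eqVneq q p0; first by rewrite p0D orbT.
by case: (q \in D); rewrite ?andbF ?andbT //=; apply: read_lt_total.
Qed.

Lemma reading_order_remove_split : reading_order (remove_cross D p0) = before ++ after.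
Proof.
have ne_p0 s : all (fun q => read_lt q p0 || read_lt p0 q) s -> filter (predC1 p0) s = s.
  move=> /allP s_ne; apply/all_filterP/allP => q /s_ne /=.
  by apply: contraTneq => ->; rewrite read_lt_irr.
rewrite reading_order_remove_cross reading_order_split filter_cat /= eqxx !ne_p0 //.
  by apply/allP => q; rewrite mem_after => /andP[_ ->]; rewrite orbT.
by apply/allP => q; rewrite mem_filter => /andP[-> _].
Qed.

End ReadingWordSplit.

Lemma antidiag_row k m : map antidiag [seq (k, c) | c <- rev (iota 1 m)] = rev (iota k m).
Proof.
rewrite -map_comp map_rev (iotaDl 1 0) -map_comp.
have -> : iota k m = map (addn k) (iota 0 m) by rewrite -iotaDl addn0.
by congr rev; apply: eq_map => c; rewrite /antidiag /=; lia.
Qed.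

Lemma reading_word_split D i m :
  is_pipe_dream D ->
  (forall c, 0 < c <= m.+1 -> (i, c) \in D) ->
  (i.+1, m.+1) \notin D ->
  (forall c, 0 < c <= m -> (i.+1, c) \in D) ->
  exists X Q B, [/\ all (leq (i + m).+2) Q, all (leq i.+2) B,
    reading_word D = X ++ (i + m) :: rev (iota i m) ++ Q ++ rev (iota i.+1 m) ++ B &
    reading_word (remove_cross D (i, m.+1)) =
      X ++ rev (iota i m) ++ Q ++ rev (iota i.+1 m) ++ B].
Proof.
move=> D_pos row_i gap row_i1.
set below := [seq q <- reading_order D | i.+1 < q.1].
set right_i1 := [seq q <- reading_order D | (q.1 == i.+1) && (m.+1 < q.2)].
exists (map antidiag [seq q <- reading_order D | read_lt q (i, m.+1)]).
exists (map antidiag right_i1), (map antidiag below); split.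
- apply/allP => _ /mapP[[r c] + ->]; rewrite mem_filter /antidiag /=; lia.
- apply/allP => _ /mapP[[r c] + ->]; rewrite mem_filter mem_reading_order => /andP[/= ri rcD].
  have /andP[/= r0 c0] := allP D_pos _ rcD; rewrite /antidiag /=; lia.
- rewrite reading_wordE {1}(reading_order_split D_pos row_i gap row_i1).
  by rewrite map_cat /= !map_cat !antidiag_row /antidiag /= addnS.
rewrite reading_wordE (reading_order_remove_split D_pos row_i gap row_i1).
by rewrite !map_cat !antidiag_row.
Qed.

Lemma reading_word_pos D : is_pipe_dream D -> all (leq 1) (reading_word D).
Proof.
move=> /allP D_pos; apply/allP => a /mapP[q]; rewrite mem_reading_order.
by move=> /D_pos /andP[q1 q2] ->; rewrite /antidiag; lia.
Qed.

Lemma is_pipe_dream_remove_cross D p : is_pipe_dream D -> is_pipe_dream (remove_cross D p).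
Proof. by move=> /allP D_pos; apply/allP => q; rewrite mem_filter => /andP[_ /D_pos]. Qed.

Lemma bounded_demazure D : is_pipe_dream D -> bounded (demazure D).
Proof. by move=> D_pos; apply: bounded_foldl_dstar (reading_word_pos D_pos) _. Qed.

Lemma papp_demazure D : is_pipe_dream D ->
  papp (demazure D) =1 foldl hecke (papp [::]) (reading_word D).
Proof. by move=> D_pos; apply: papp_foldl_dstar (reading_word_pos D_pos) _. Qed.

Unset Implicit Arguments.

Theorem mainTheorem3 (D : pipe_dream) (i jmin : nat) :
  is_pipe_dream D -> 0 < i ->
  jmin \in Jset i D ->
  (forall j, j \in Jset i D -> jmin <= j) ->
  peq (demazure D) (dstar (demazure (remove_cross D (i, jmin))) i).
Proof.
move=> D_pos i0 + jmin_le x _; rewrite mem_Jset => /and3P[gap j0 j_start].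
have [m jm] : exists m, jmin = m.+1 by exists jmin.-1; rewrite prednK.
have row_i c : 0 < c <= m.+1 -> (i, c) \in D.
  by move=> c_le; apply: mem_row_before_start; lia.
have row_i1 c : 0 < c <= m -> (i.+1, c) \in D.
  by move=> c_le; apply: contraT => cD; have := jmin_le c; rewrite mem_Jset cD; lia.
rewrite jm in gap *.
have [X [Q [B [geQ geB eD eD']]]] := reading_word_split D_pos row_i gap row_i1.
have D'_pos := is_pipe_dream_remove_cross (i, m.+1) D_pos.
rewrite papp_dstar ?bounded_demazure // (eq_hecke i (papp_demazure D'_pos)).
rewrite papp_demazure // eD eD' !foldl_cat.
by rewrite (hecke_eq_move geQ geB) !foldl_cat.
Qed.
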